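(* Let $b\ge3$, $1\le j\le b-1$, $\ell\in\{2,\dots,b\}$. For $i=1,\dots,\ell$ let $I_i=[a_i,b_i]\subseteq[0,1]$ be nonempty intervals, fix numbers $\bar p_{\ell+1},\dots,\bar p_b$, and fix a probability vector $\bar q\in\mathbb R^b$ with $\bar q_1=\bar q_2=\dots=\bar q_\ell$. Let $D$ be the set of pairs $(p,\bar q)$ where $p$ is a probability vector in $\mathbb R^b$ with $p_i\in I_i$ for $i\le\ell$ and $p_i=\bar p_i$ for $i>\ell$. If $(\bar p;\bar q)\in D$ is a maximum point of $\Psi_j$ on $D$, then either $\bar p_1=\bar p_2=\dots=\bar p_\ell$, or the maximum of $\Psi_j$ on $D$ is also attained at some point $(p';\bar q)\in D$ with $p'_i\in\{a_i,b_i\}$ for some $i\in\{1,\dots,\ell\}$.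
   Context: For an integer $1\le j\le b-1$ and vectors $p,q\in\mathbb R^b$, $$\Psi_j(p;q)=\frac{1}{(b-j-1)!}\sum_{\sigma\in S_b}\Big(p_{\sigma(1)}\cdots p_{\sigma(j)}\,q_{\sigma(j+1)}+q_{\sigma(1)}\cdots q_{\sigma(j)}\,p_{\sigma(j+1)}\Big),$$ where $S_b$ is the set of permutations of $\{1,\dots,b\}$. *)

From HB Require Import structures.
From mathcomp Require Import all_boot all_order all_algebra all_fingroup.
Set Implicit Arguments. Unset Strict Implicit. Unset Printing Implicit Defensive.
Import Order.TTheory GRing.Theory Num.Theory.
Local Open Scope ring_scope.

(* Indices 1..b of the paper are 0..b-1 here (the ordinals 'I_b).
   Psi_j(p;q) = 1/(b-j-1)! * sum_{sigma in S_b}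
      ( p_{s(1)}..p_{s(j)} q_{s(j+1)} + q_{s(1)}..q_{s(j)} p_{s(j+1)} ),
   where s(1..j) become sigma(0..j-1) and s(j+1) becomes sigma(j). The
   single factor at index j is written as a (one-term) sum over i with i = j. *)
Definition Psi (R : fieldType) (b j : nat) (p q : 'I_b -> R) : R :=
  ((b - j - 1)`!)%:R^-1 *
  \sum_(s : 'S_b)
     ( (\prod_(i : 'I_b | (i < j)%N) p (s i)) * (\sum_(i : 'I_b | (i == j :> nat)) q (s i))
     + (\prod_(i : 'I_b | (i < j)%N) q (s i)) * (\sum_(i : 'I_b | (i == j :> nat)) p (s i))).

Definition prob_vec (R : numDomainType) (b : nat) (p : 'I_b -> R) : Prop :=
  (forall i, 0 <= p i) /\ \sum_(i < b) p i = 1.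

Definition inD (R : numDomainType) (b l : nat) (a c pbar p : 'I_b -> R) : Prop :=
  prob_vec p /\
  (forall i : 'I_b, (i < l)%N -> a i <= p i <= c i) /\
  (forall i : 'I_b, (l <= i)%N -> p i = pbar i).

From HB Require Import structures.
From mathcomp Require Import all_boot all_order all_algebra all_fingroup.
From mathcomp Require Import ring lra.
Import Order.TTheory GRing.Theory Num.Theory.
Set Implicit Arguments. Unset Strict Implicit. Unset Printing Implicit Defensive.
Local Open Scope ring_scope.

(* Psi_j(p; q) is a polynomial which is affine in each single
   coordinate p_m (every monomial of Psi_j is multilinear in p).  Fix two indices
   i <> k among the first l with q_i = q_k, and move mass t from p_k to p_i:
   p(t) = p + t (e_i - e_k).  Then t |-> Psi_j(p(t); q) is the restriction of a
   biaffine function G(u, w) (u = p_i, w = p_k) to an antidiagonal, and G is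
   symmetric because swapping coordinates i and k does not change Psi_j when
   q_i = q_k.  Hence  Psi_j(p(t); q) = Psi_j(p; q) + D t (p_k - p_i - t)
   for a constant D.  If the maximum point pbar lies in the interior of the box
   and pbar_i <> pbar_k, then t = 0 is an interior zero of the quadratic
   t (p_k - p_i - t) at which this function is maximal on a small window, which
   forces D = 0: Psi_j is constant along the whole segment, and we can slide
   until p_i or p_k hits an end of its interval. *)

Section Affine.
Variable R : comPzRingType.

Definition affine (f : R -> R) : Prop := forall u, f u = f 0 + u * (f 1 - f 0).

Lemma affine_const (c : R) : affine (fun _ => c).
Proof. by move=> u; rewrite subrr mulr0 addr0. Qed.

Lemma affine_id : affine id.
Proof. by move=> u; rewrite subr0 mulr1 add0r. Qed.

Lemma affineD (f g : R -> R) : affine f -> affine g -> affine (fun u => f u + g u).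
Proof. by move=> hf hg u; rewrite hf hg; ring. Qed.

Lemma affineMl (c : R) (f : R -> R) : affine f -> affine (fun u => c * f u).
Proof. by move=> hf u; rewrite hf; ring. Qed.

Lemma affineMr (c : R) (f : R -> R) : affine f -> affine (fun u => f u * c).
Proof. by move=> hf u; rewrite hf; ring. Qed.

Lemma affine_sum (I : finType) (P : pred I) (F : I -> R -> R) :
  (forall x, affine (F x)) -> affine (fun u => \sum_(x | P x) F x u).
Proof.
move=> hF u.
rewrite (eq_bigr (fun x => F x 0 + u * (F x 1 - F x 0))); last by move=> x _; exact: hF.
by rewrite big_split /= -mulr_sumr sumrB.
Qed.

Lemma biaffine_antidiagonal (G : R -> R -> R) :
  (forall w, affine (G^~ w)) -> (forall u, affine (G u)) -> G 1 0 = G 0 1 ->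
  forall x y t, G (x + t) (y - t) =
    G x y + (G 1 1 - G 1 0 - G 0 1 + G 0 0) * t * (y - x - t).
Proof.
move=> Gu Gw sym x y t.
have expand u w : G u w = G 0 0 + u * (G 1 0 - G 0 0)
    + w * (G 0 1 + u * (G 1 1 - G 0 1) - G 0 0 - u * (G 1 0 - G 0 0)).
  by rewrite Gw (Gu 0) (Gu 1); ring.
by rewrite (expand (x + t) (y - t)) (expand x y) sym; ring.
Qed.

End Affine.

Section PsiAlgebra.
Variables (R : fieldType) (b j : nat).
Implicit Types (p q : 'I_b -> R) (i k : 'I_b).

Definition upd p i (u : R) : 'I_b -> R := fun m => if m == i then u else p m.

Lemma upd_comm p i k (u w : R) :
  i != k -> upd (upd p i u) k w =1 upd (upd p k w) i u.
Proof.
move=> ik m; rewrite /upd.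
case: (eqVneq m k) => [->|//]; by rewrite eq_sym (negbTE ik).
Qed.

Lemma eq_Psi p p' q q' : p =1 p' -> q =1 q' -> Psi j p q = Psi j p' q'.
Proof.
move=> ep eq; rewrite /Psi; congr (_ * _); apply: eq_bigr => s _.
by congr (_ * _ + _ * _); apply: eq_bigr => m _; rewrite ?ep ?eq.
Qed.

(* A product over coordinates of an updated vector is affine in the new
   value: the updated coordinate occurs at most once. *)
Lemma affine_prod_upd p i (s : 'S_b) (P : pred 'I_b) :
  affine (fun u => \prod_(m | P m) upd p i u (s m)).
Proof.
case Hm: (P (s^-1 i)%g).
  have E u : \prod_(m | P m) upd p i u (s m) =
             u * \prod_(m | P m && (m != (s^-1 i)%g)) p (s m).
    rewrite (bigD1 _ Hm) /= {1}/upd permKV eqxx; congr (_ * _).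
    apply: eq_bigr => m /andP[_ hm]; rewrite /upd.
    by case: eqP => // e; case/negP: hm; rewrite -e permK.
  by move=> u; rewrite !E; ring.
have E u : \prod_(m | P m) upd p i u (s m) = \prod_(m | P m) p (s m).
  apply: eq_bigr => m hm; rewrite /upd; case: eqP => // e.
  by move: Hm; rewrite -e permK hm.
by move=> u; rewrite !E; ring.
Qed.

Lemma affine_Psi_upd p q i : affine (fun u => Psi j (upd p i u) q).
Proof.
apply: affineMl; apply: affine_sum => s.
apply: affineD; first by apply: affineMr; apply: affine_prod_upd.
apply: affineMl; apply: affine_sum => m.
by rewrite /upd; case: (s m == i); [exact: affine_id | exact: affine_const].
Qed.

Lemma Psi_perm (t : 'S_b) p q :
  Psi j (fun m => p (t m)) (fun m => q (t m)) = Psi j p q.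
Proof.
rewrite /Psi; congr (_ * _); symmetry.
rewrite (reindex_inj (mulIg t)); apply: eq_bigr => s _.
by congr (_ * _ + _ * _); apply: eq_bigr => m _; rewrite permM.
Qed.

Lemma Psi_swap p q i k (u w : R) : i != k -> q i = q k ->
  Psi j (upd (upd p i u) k w) q = Psi j (upd (upd p i w) k u) q.
Proof.
move=> ik qik; rewrite -(Psi_perm (tperm i k)).
have ki : k != i by rewrite eq_sym.
apply: eq_Psi => m; rewrite /upd.
- case: (tpermP i k m) => [->|->|/eqP mi /eqP mk];
    by rewrite ?eqxx ?(negbTE ik) ?(negbTE ki) ?(negbTE mi) ?(negbTE mk).
- by case: (tpermP i k m) => [->|->|] //; rewrite qik.
Qed.

Definition transfer p i k (t : R) : 'I_b -> R :=
  fun m => p m + t * ((m == i)%:R - (m == k)%:R).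

Lemma transfer_upd p i k t :
  i != k -> transfer p i k t =1 upd (upd p i (p i + t)) k (p k - t).
Proof.
move=> ik m; rewrite /transfer /upd.
case: (eqVneq m k) => [->|mk]; first by rewrite eq_sym (negbTE ik) /=; ring.
by case: (eqVneq m i) => [->|_] /=; ring.
Qed.

Lemma Psi_transfer p q i k : i != k -> q i = q k ->
  exists D : R, forall t,
    Psi j (transfer p i k t) q = Psi j p q + D * t * (p k - p i - t).
Proof.
move=> ik qik; pose G u w := Psi j (upd (upd p i u) k w) q.
have Gu w : affine (G^~ w).
  move=> u; rewrite /G !(eq_Psi (upd_comm _ _ _ ik) (frefl q)).
  exact: affine_Psi_upd.
have Gw u : affine (G u) by exact: affine_Psi_upd.
have Gsym : G 1 0 = G 0 1 by exact: Psi_swap.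
have Gp : G (p i) (p k) = Psi j p q.
  apply: eq_Psi => // m; rewrite /upd.
  by case: (eqVneq m k) => [->|_] //; case: (eqVneq m i) => [->|_].
exists (G 1 1 - G 1 0 - G 0 1 + G 0 0) => t.
rewrite (eq_Psi (transfer_upd p t ik) (frefl q)) -/(G _ _).
by rewrite (biaffine_antidiagonal Gu Gw Gsym) Gp.
Qed.

End PsiAlgebra.

Section RealFacts.
Variable R : realFieldType.

Lemma exists_pos_lower_bound (s : seq R) :
  all (fun u => 0 < u) s -> exists2 h : R, 0 < h & all (fun u => h <= u) s.
Proof.
elim: s => [|u s IH] /=; first by exists 1.
case/andP=> u_gt0 /IH [h h_gt0 hs]; exists (Num.min u h); first by rewrite lt_min u_gt0.
rewrite ge_min lexx /=; apply: sub_all hs => v /= hv.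
by rewrite ge_min hv orbT.
Qed.

(* If t |-> D t (d - t), with d <> 0, is nonpositive at t = h and t = -h for
   some 0 < h < |d|, then D = 0: the two values have opposite signs for D <> 0. *)
Lemma quadratic_flat (D d h : R) : d != 0 -> 0 < h -> h < `|d| ->
  D * h * (d - h) <= 0 -> D * (- h) * (d - - h) <= 0 -> D = 0.
Proof.
move=> d_neq0 h_gt0 h_lt f1 f2; apply/eqP; rewrite eq_le.
case: (ltgtP d 0) h_lt => [d_lt0|d_gt0|d_eq0]; last by move: d_neq0; rewrite d_eq0 eqxx.
- rewrite ltr0_norm // => h_lt.
  have s1 : h * (d - h) < 0 by rewrite pmulr_rlt0 //; lra.
  have s2 : h * (d + h) < 0 by rewrite pmulr_rlt0 //; lra.
  by apply/andP; split; nra.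
- rewrite gtr0_norm // => h_lt.
  have s1 : 0 < h * (d - h) by rewrite pmulr_rgt0 //; lra.
  have s2 : 0 < h * (d + h) by rewrite pmulr_rgt0 //; lra.
  by apply/andP; split; nra.
Qed.

End RealFacts.

Section Domain.
Variables (R : realFieldType) (b l : nat) (a c pbar : 'I_b -> R).

Lemma sum_transfer (p : 'I_b -> R) (i k : 'I_b) (t : R) :
  \sum_(m < b) transfer p i k t m = \sum_(m < b) p m.
Proof.
rewrite /transfer big_split /= -mulr_sumr sumrB.
have delta_sum (z : 'I_b) : \sum_(m < b) ((m == z)%:R : R) = 1.
  by rewrite (bigD1 z) //= eqxx big1 ?addr0 // => m /negbTE ->.
by rewrite !delta_sum subrr mulr0 addr0.
Qed.

Lemma inD_transfer (p : 'I_b -> R) (i k : 'I_b) (t : R) :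
  i != k -> (i < l)%N -> (k < l)%N -> 0 <= a i -> 0 <= a k ->
  inD l a c pbar p -> a i <= p i + t <= c i -> a k <= p k - t <= c k ->
  inD l a c pbar (transfer p i k t).
Proof.
move=> ik il kl ai_ge0 ak_ge0 [[p_ge0 p_sum] [p_box p_out]] hi hk.
have E m : transfer p i k t m =
    if m == k then p k - t else if m == i then p i + t else p m.
  by rewrite (transfer_upd _ _ ik).
split; [split|split].
- move=> m; rewrite E.
  case: eqP => _; first by case/andP: hk => hk _; exact: le_trans hk.
  case: eqP => _ //; by case/andP: hi => hi _; exact: le_trans hi.
- by rewrite sum_transfer.
- move=> m ml; rewrite E.
  by case: (eqVneq m k) => [->|_] //; case: (eqVneq m i) => [->|_] //; exact: p_box.
- move=> m lm; rewrite E; have m_out (z : 'I_b) : (z < l)%N -> m != z.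
    by apply: contraTneq => <-; rewrite -leqNgt.
  by rewrite (negbTE (m_out k kl)) (negbTE (m_out i il)) p_out.
Qed.

End Domain.

Section InteriorMaximum.
Variables (R : realFieldType) (b j l : nat) (a c pbar qbar : 'I_b -> R).
Hypothesis a_ge0 : forall m : 'I_b, (m < l)%N -> 0 <= a m.
Hypothesis pbar_in : inD l a c pbar pbar.
Hypothesis pbar_max : forall p, inD l a c pbar p -> Psi j p qbar <= Psi j pbar qbar.

Variables i k : 'I_b.
Hypotheses (il : (i < l)%N) (kl : (k < l)%N).
Hypotheses (i_int : a i < pbar i < c i) (k_int : a k < pbar k < c k).
Hypotheses (pbar_ik : pbar i != pbar k) (qbar_ik : qbar i = qbar k).

Let ik : i != k. Proof. by apply: contraNneq pbar_ik => ->. Qed.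

Let transfer_in (t : R) : a i <= pbar i + t <= c i -> a k <= pbar k - t <= c k ->
  inD l a c pbar (transfer pbar i k t).
Proof. exact: inD_transfer ik il kl (a_ge0 il) (a_ge0 kl) pbar_in. Qed.

(* Psi_j is constant along the transfer line through pbar: the quadratic of
   Psi_transfer is maximal at its interior root t = 0, so it vanishes. *)
Lemma max_transfer_flat (t : R) :
  Psi j (transfer pbar i k t) qbar = Psi j pbar qbar.
Proof.
have [D PsiE] := Psi_transfer j pbar ik qbar_ik.
have d_neq0 : pbar k - pbar i != 0 by rewrite subr_eq0 eq_sym.
pose slacks := [:: c i - pbar i; pbar i - a i; c k - pbar k; pbar k - a k;
                   `|pbar k - pbar i| / 2].
have slacks_gt0 : all (fun u => 0 < u) slacks.
  case/andP: i_int => ? ?; case/andP: k_int => ? ?.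
  by rewrite /= !subr_gt0 divr_gt0 ?normr_gt0 //= !andbT; apply/and4P.
have [h h_gt0] := exists_pos_lower_bound slacks_gt0.
rewrite /= andbT => /and5P[h_ci h_ai h_ck h_ak h_d].
have quad_le0 s : a i <= pbar i + s <= c i -> a k <= pbar k - s <= c k ->
    D * s * (pbar k - pbar i - s) <= 0.
  by move=> hi hk; have := pbar_max (transfer_in hi hk); rewrite PsiE; lra.
have h_lt : h < `|pbar k - pbar i|.
  have : 0 < `|pbar k - pbar i| by rewrite normr_gt0.
  lra.
have D0 : D = 0.
  apply: (quadratic_flat d_neq0 h_gt0 h_lt);
    by apply: quad_le0; apply/andP; split; lra.
by rewrite PsiE D0 !mul0r addr0.
Qed.

Lemma max_reaches_boundary :
  exists p' : 'I_b -> R,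
    inD l a c pbar p' /\ Psi j p' qbar = Psi j pbar qbar /\
    exists m : 'I_b, (m < l)%N /\ (p' m = a m \/ p' m = c m).
Proof.
have ki : k != i by rewrite eq_sym.
case/andP: i_int => ? ?; case/andP: k_int => ? ?.
case: (lerP (c i - pbar i) (pbar k - a k)) => hle.
- exists (transfer pbar i k (c i - pbar i)).
  split; first by apply: transfer_in; apply/andP; split; lra.
  split; first exact: max_transfer_flat.
  by exists i; split => //; right; rewrite /transfer eqxx (negbTE ik) /=; ring.
- exists (transfer pbar i k (pbar k - a k)).
  split; first by apply: transfer_in; apply/andP; split; lra.
  split; first exact: max_transfer_flat.
  by exists k; split => //; left; rewrite /transfer eqxx (negbTE ki) /=; ring.
Qed.

End InteriorMaximum.

Lemma box_boundary_or_interior (R : realFieldType) (b l : nat) (a c p : 'I_b -> R) :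
  (forall m : 'I_b, (m < l)%N -> a m <= p m <= c m) ->
  (exists m : 'I_b, (m < l)%N /\ (p m = a m \/ p m = c m)) \/
  (forall m : 'I_b, (m < l)%N -> a m < p m < c m).
Proof.
move=> p_box.
case: (boolP [exists m : 'I_b, (m < l)%N && ((p m == a m) || (p m == c m))]).
  by case/existsP=> m /andP[ml /orP[] /eqP]; left; exists m; auto.
move/existsPn=> no_bd; right => m ml; have /andP[am mc] := p_box m ml.
have := no_bd m; rewrite ml negb_or /= => /andP[pa pc].
by rewrite !lt_neqAle am mc pc eq_sym pa.
Qed.

Lemma constant_or_distinct (T : eqType) (b l : nat) (p : 'I_b -> T) :
  (forall i k : 'I_b, (i < l)%N -> (k < l)%N -> p i = p k) \/
  (exists i k : 'I_b, [/\ (i < l)%N, (k < l)%N & p i != p k]).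
Proof.
case: (boolP [exists i : 'I_b, exists k : 'I_b, [&& (i < l)%N, (k < l)%N & p i != p k]]).
  by case/existsP=> i /existsP[k /and3P[il kl ne]]; right; exists i, k.
move/existsPn=> same; left => i k il kl; apply/eqP.
by have /existsPn/(_ k) := same i; rewrite il kl /= negbK.
Qed.

Theorem mainTheorem6 (R : realFieldType) (b j l : nat)
  (a c pbar qbar : 'I_b -> R) :
  (3 <= b)%N -> (1 <= j)%N -> (j <= b - 1)%N -> (2 <= l)%N -> (l <= b)%N ->
  (forall i : 'I_b, (i < l)%N -> 0 <= a i /\ a i <= c i /\ c i <= 1) ->
  prob_vec qbar ->
  (forall i k : 'I_b, (i < l)%N -> (k < l)%N -> qbar i = qbar k) ->
  inD l a c pbar pbar ->
  (forall p, inD l a c pbar p -> Psi j p qbar <= Psi j pbar qbar) ->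
  (forall i k : 'I_b, (i < l)%N -> (k < l)%N -> pbar i = pbar k) \/
  (exists p' : 'I_b -> R,
     inD l a c pbar p' /\ Psi j p' qbar = Psi j pbar qbar /\
     exists i : 'I_b, (i < l)%N /\ (p' i = a i \/ p' i = c i)).
Proof.
move=> _ _ _ _ _ box _ qbar_eq pbar_in pbar_max.
have a_ge0 (m : 'I_b) : (m < l)%N -> 0 <= a m by move=> /box[].
have [pbar_bd | interior] := box_boundary_or_interior pbar_in.2.1.
  by right; exists pbar.
have [constant | [i [k [il kl pbar_ik]]]] := constant_or_distinct l pbar.
  by left.
right; exact: (max_reaches_boundary a_ge0 pbar_in pbar_max il kl
                 (interior i il) (interior k kl) pbar_ik (qbar_eq i k il kl)).
Qed.
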